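(* Let $G$ be a group, $n\ge1$, $\phi_1,\dots,\phi_n\in\operatorname{End}(G)$ and $\sigma\in S_n$. Let $\phi$ be the endomorphism of $G^n$ given by $\phi(g_1,\dots,g_n)=(\phi_1(g_{\sigma(1)}),\dots,\phi_n(g_{\sigma(n)}))$. Write the disjoint cycle decomposition of $\sigma$, including cycles of length one, as $\sigma=(c_1\,\dots\,c_{n_1})(c_{n_1+1}\,\dots\,c_{n_2})\cdots(c_{n_{k-1}+1}\,\dots\,c_{n_k})$ with $0=n_0<n_1<\dots<n_k=n$, where the cycle $(a_1\,a_2\,\dots\,a_m)$ means $a_1\mapsto a_2\mapsto\cdots\mapsto a_m\mapsto a_1$. Put $\tilde\phi_j=\phi_{c_{n_{j-1}+1}}\circ\phi_{c_{n_{j-1}+2}}\circ\cdots\circ\phi_{c_{n_j}}$. Then $R(\phi)=\prod_{j=1}^kR(\tilde\phi_j)$.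
   Context: For an endomorphism $\psi$ of a group $A$, $x,y\in A$ are $\psi$-conjugate if $x=gy\psi(g)^{-1}$ for some $g\in A$; $R(\psi)\in\mathbb{N}\cup\{\infty\}$ is the number of $\psi$-conjugacy classes, with the convention $a\cdot\infty=\infty$. *)

From Stdlib Require Import ClassicalDescription ClassicalEpsilon.
From HB Require Import structures.
From mathcomp Require Import all_boot fingroup perm.

Set Implicit Arguments.
Unset Strict Implicit.
Unset Printing Implicit Defensive.

Local Open Scope group_scope.

Definition tconj (G : groupType) (psi : G -> G) (x y : G) : Prop :=
  exists g : G, x = g * y * (psi g)^-1.

Definition has_Rnum (G : groupType) (psi : G -> G) (n : nat) : Prop :=
  exists f : 'I_n -> G,
    (forall x : G, exists i, tconj psi x (f i)) /\
    (forall i j, tconj psi (f i) (f j) -> i = j).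

(* Reidemeister number R(psi) in N u {oo}; None stands for oo. *)
Definition Rnum (G : groupType) (psi : G -> G) : option nat :=
  match excluded_middle_informative (exists n, has_Rnum psi n) with
  | left H => Some (proj1_sig (constructive_indefinite_description _ H))
  | right _ => None
  end.

Definition emul (a b : option nat) : option nat :=
  match a, b with
  | Some x, Some y => Some (x * y)%N
  | _, _ => None
  end.

Definition prodG (n : nat) (G : groupType) := {ffun 'I_n -> G}.

Section ProdGroup.
Variables (n : nat) (G : groupType).

HB.instance Definition _ := Choice.on (prodG n G).

Definition pmul (x y : prodG n G) : prodG n G := [ffun i => x i * y i].
Definition pinv (x : prodG n G) : prodG n G := [ffun i => (x i)^-1].
Definition pone : prodG n G := [ffun => 1].

Fact pmulA : associative pmul.
Proof. by move=> x y z; apply/ffunP=> i; rewrite !ffunE mulgA. Qed.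
Fact pmul1 : left_id pone pmul.
Proof. by move=> x; apply/ffunP=> i; rewrite !ffunE mul1g. Qed.
Fact pmul1r : right_id pone pmul.
Proof. by move=> x; apply/ffunP=> i; rewrite !ffunE mulg1. Qed.
Fact pmulV : left_inverse pone pinv pmul.
Proof. by move=> x; apply/ffunP=> i; rewrite !ffunE mulVg. Qed.
Fact pmulVr : right_inverse pone pinv pmul.
Proof. by move=> x; apply/ffunP=> i; rewrite !ffunE mulgV. Qed.

HB.instance Definition _ :=
  isGroup.Build (prodG n G) pmulA pmul1 pmul1r pmulV pmulVr.

End ProdGroup.

Definition phiN (G : groupType) (n : nat) (phi : 'I_n -> G -> G)
    (sigma : {perm 'I_n}) (g : prodG n G) : prodG n G :=
  [ffun i => phi i (g (sigma i))].

(* For the cycle of sigma starting at r, i.e. (r  sigma r  ...  sigma^(m-1) r),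
   the composite phi_r o phi_(sigma r) o ... o phi_(sigma^(m-1) r).
   orbit sigma r = [:: r; sigma r; ...; sigma^(m-1) r]  (fingraph). *)
Definition tilde (G : groupType) (n : nat) (phi : 'I_n -> G -> G)
    (sigma : {perm 'I_n}) (r : 'I_n) : G -> G :=
  foldr (fun i f => phi i \o f) id (orbit sigma r).

From Stdlib Require Import ClassicalDescription ClassicalEpsilon Classical.
From HB Require Import structures.
From mathcomp Require Import all_boot fingroup perm.

Set Implicit Arguments.
Unset Strict Implicit.
Unset Printing Implicit Defensive.

(* This count
      is invariant under a map that is onto up to equivalence and reflects and
      preserves E, and it is multiplicative on (iterated) products.
   2. Cycle products: for x in G^n, cycle_prod x k i is the i-th coordinate of
      x * phi(x) * ... * phi^(k-1)(x).  If x = h y phi(h)^-1, its value along a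
      whole cycle of sigma starting at r is tilde_r-conjugate to that of y by
      h_r; conversely h is recovered from h_r by walking the cycle backwards.
   3. Comparison: the map x |-> (cycle_prod x (|cycle of r|) r)_{r in reps}
      from G^n to the product over reps is onto and identifies phi-twisted
      conjugacy with the product of the tilde_r-twisted conjugacies; the main
      theorem follows from 1. *)

Section CountingClasses.
Variable T : Type.
Implicit Types E : T -> T -> Prop.

Record equivalence E : Prop := Equivalence {
  equiv_refl : forall x, E x x;
  equiv_sym : forall x y, E x y -> E y x;
  equiv_trans : forall x y z, E x y -> E y z -> E x z }.

Definition has_classes E (n : nat) : Prop :=
  exists f : 'I_n -> T,
    (forall x, exists i, E x (f i)) /\ (forall i j, E (f i) (f j) -> i = j).

Definition nclasses E : option nat :=
  match excluded_middle_informative (exists n, has_classes E n) with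
  | left H => Some (proj1_sig (constructive_indefinite_description _ H))
  | right _ => None
  end.

Lemma has_classes_le E n m : equivalence E ->
  has_classes E n -> has_classes E m -> n <= m.
Proof.
move=> [_ Esym Etrans] [f [_ f_inj]] [g [g_cover _]].
have [h Hh] : exists h : 'I_n -> 'I_m, forall i, E (f i) (g (h i)).
  by apply: (choice (fun i j => E (f i) (g j))) => i; exact: g_cover.
have h_inj : injective h.
  move=> i j hij; apply: f_inj; apply: Etrans (Hh i) _.
  by rewrite hij; exact: Esym.
by have := leq_card h h_inj; rewrite !card_ord.
Qed.

Lemma nclassesE E n : equivalence E -> has_classes E n -> nclasses E = Some n.
Proof.
move=> eqE En; rewrite /nclasses; case: excluded_middle_informative => [H|[]];
  last by exists n.
case: constructive_indefinite_description => m Em /=.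
by congr Some; apply/eqP; rewrite eqn_leq !(has_classes_le eqE).
Qed.

Lemma nclasses_inf E : ~ (exists n, has_classes E n) -> nclasses E = None.
Proof. by move=> H; rewrite /nclasses; case: excluded_middle_informative. Qed.

Lemma has_classes_card E (I : finType) (f : I -> T) :
  (forall x, exists i, E x (f i)) -> (forall i j, E (f i) (f j) -> i = j) ->
  has_classes E #|I|.
Proof.
move=> f_cover f_inj; exists (fun k => f (enum_val k)); split.
  by move=> x; have [i Ei] := f_cover x; exists (enum_rank i); rewrite enum_rankK.
by move=> i j /f_inj /enum_val_inj.
Qed.

(* Finitely many elements meeting every class leave finitely many classes:
   discard repeated classes one at a time. *)
Lemma finite_cover_classes E N (f : 'I_N -> T) : equivalence E ->
  (forall x, exists i, E x (f i)) -> exists n, has_classes E n.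
Proof.
move=> [_ Esym Etrans]; elim: N f => [|N IH] f f_cover.
  by exists 0, f; split => // -[].
have [[i [j [neq_ij Eij]]]|no_repeat] :=
  classic (exists i j, i <> j /\ E (f i) (f j)).
  apply: (IH (fun k => f (lift j k))) => x; have [l El] := f_cover x.
  case: (unliftP j l) El => [k ->|->] El; first by exists k.
  have /eqP/unlift_some[k ik _] : j <> i by move=> eji; apply: neq_ij.
  by exists k; rewrite -ik; apply: Etrans El (Esym _ _ Eij).
exists N.+1, f; split => // i j Eij.
by apply: NNPP => neq_ij; apply: no_repeat; exists i, j.
Qed.

End CountingClasses.

Lemma nclasses_transport A B (EA : A -> A -> Prop) (EB : B -> B -> Prop)
    (F : A -> B) :
  equivalence EA -> equivalence EB -> (forall b, exists a, EB b (F a)) ->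
  (forall x y, EA x y <-> EB (F x) (F y)) -> nclasses EA = nclasses EB.
Proof.
move=> eqA eqB F_onto F_equiv; have [_ Bsym Btrans] := eqB.
have AB k : has_classes EA k -> has_classes EB k.
  move=> [f [f_cover f_inj]]; exists (fun i => F (f i)); split.
    move=> b; have [a Ea] := F_onto b; have [i Ei] := f_cover a.
    by exists i; apply: Btrans Ea _; apply/F_equiv.
  by move=> i j /F_equiv /f_inj.
have BA k : has_classes EB k -> has_classes EA k.
  move=> [f [f_cover f_inj]].
  have [g Hg] : exists g : 'I_k -> A, forall i, EB (f i) (F (g i)).
    by apply: (choice (fun i a => EB (f i) (F a))) => i; exact: F_onto.
  exists g; split.
    move=> a; have [i Ei] := f_cover (F a).
    by exists i; apply/F_equiv; apply: Btrans Ei (Hg i).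
  move=> i j /F_equiv Eij; apply: f_inj.
  by apply: Btrans (Hg i) (Btrans _ _ _ Eij (Bsym _ _ (Hg j))).
have [[k Ak]|noA] := classic (exists k, has_classes EA k).
  by rewrite (nclassesE eqA Ak) (nclassesE eqB (AB _ Ak)).
by rewrite !nclasses_inf // => -[k /BA Ak]; apply: noA; exists k.
Qed.

Definition prod_rel A B (EA : A -> A -> Prop) (EB : B -> B -> Prop)
    (x y : A * B) : Prop :=
  EA x.1 y.1 /\ EB x.2 y.2.

Lemma prod_rel_equiv A B (EA : A -> A -> Prop) (EB : B -> B -> Prop) :
  equivalence EA -> equivalence EB -> equivalence (prod_rel EA EB).
Proof.
move=> [Ar As At] [Br Bs Bt]; split=> [x|x y [? ?]|x y z [? ?] [? ?]]; split; eauto.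
Qed.

Lemma nclasses_prod A B (EA : A -> A -> Prop) (EB : B -> B -> Prop)
    (a0 : A) (b0 : B) :
  equivalence EA -> equivalence EB ->
  nclasses (prod_rel EA EB) = emul (nclasses EA) (nclasses EB).
Proof.
move=> eqA eqB; have eqAB := prod_rel_equiv eqA eqB.
have [[nA [fA [cA iA]]]|infA] := classic (exists n, has_classes EA n); last first.
  rewrite (nclasses_inf infA) nclasses_inf // => -[N [f [f_cover _]]].
  apply: infA; apply: (finite_cover_classes (f := fun i => (f i).1) eqA) => a.
  by have [i [Ei _]] := f_cover (a, b0); exists i.
have [[nB [fB [cB iB]]]|infB] := classic (exists n, has_classes EB n); last first.
  rewrite (nclasses_inf infB) nclasses_inf; first by case: nclasses.
  move=> [N [f [f_cover _]]].
  apply: infB; apply: (finite_cover_classes (f := fun i => (f i).2) eqB) => b.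
  by have [i [_ Ei]] := f_cover (a0, b); exists i.
have hA : has_classes EA nA by exists fA.
have hB : has_classes EB nB by exists fB.
rewrite (nclassesE eqA hA) (nclassesE eqB hB) /=; apply: nclassesE => //.
have := has_classes_card (E := prod_rel EA EB)
  (f := fun p : 'I_nA * 'I_nB => (fA p.1, fB p.2)).
rewrite card_prod !card_ord; apply.
  by move=> [a b]; have [i Ei] := cA a; have [j Ej] := cB b; exists (i, j).
by move=> [i j] [k l] [/= /iA -> /iB ->].
Qed.

Section IteratedProduct.
Variables (I : Type) (T : I -> Type) (E : forall i, T i -> T i -> Prop).
Arguments E : clear implicits.
Variable t0 : forall i, T i.
Hypothesis E_equiv : forall i, equivalence (E i).

Fixpoint tprod (s : seq I) : Type :=
  if s is i :: s' then (T i * tprod s')%type else unit.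

Fixpoint tprod_rel (s : seq I) : tprod s -> tprod s -> Prop :=
  match s return tprod s -> tprod s -> Prop with
  | [::] => fun _ _ => True
  | i :: s' => prod_rel (E i) (@tprod_rel s')
  end.

Fixpoint tprod0 (s : seq I) : tprod s :=
  match s return tprod s with [::] => tt | i :: s' => (t0 i, tprod0 s') end.

Lemma tprod_rel_equiv s : equivalence (@tprod_rel s).
Proof.
elim: s => [|i s IH] /=; first by split.
exact: prod_rel_equiv (E_equiv i) IH.
Qed.

Lemma nclasses_tprod s :
  nclasses (@tprod_rel s) = foldr emul (Some 1) [seq nclasses (E i) | i <- s].
Proof.
elim: s => [|i s IH] /=.
  apply: nclassesE; first by split.
  by exists (fun _ => tt); split => [_|i j _]; [exists ord0|rewrite !ord1].
by rewrite -IH (nclasses_prod (t0 i) (tprod0 s)) //; exact: tprod_rel_equiv.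
Qed.

End IteratedProduct.

Local Open Scope group_scope.

Section TwistedConjugacy.
Variables (G : groupType) (psi : G -> G).
Hypothesis psiM : {morph psi : x y / x * y}.

Lemma morph_1 : psi 1 = 1.
Proof. by apply: (@mulgI _ (psi 1)); rewrite -psiM !mulg1. Qed.

Lemma morph_V x : psi x^-1 = (psi x)^-1.
Proof. by apply: (@mulgI _ (psi x)); rewrite -psiM !mulgV morph_1. Qed.

Lemma tconj_equiv : equivalence (tconj psi).
Proof.
split=> [x|x y [g ->]|x y z [g ->] [h ->]].
- by exists 1; rewrite morph_1 invg1 mul1g mulg1.
- by exists g^-1; rewrite morph_V invgK !mulgA mulVg mul1g -mulgA mulVg mulg1.
- by exists (g * h); rewrite psiM invMg !mulgA.
Qed.

End TwistedConjugacy.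

Lemma RnumE (G : groupType) (psi : G -> G) : Rnum psi = nclasses (tconj psi).
Proof. by []. Qed.

Section CycleProducts.
Variables (G : groupType) (n : nat) (phi : 'I_n -> G -> G) (sigma : {perm 'I_n}).
Hypothesis phiM : forall i, {morph phi i : x y / x * y}.

Definition comp_path k i : G -> G :=
  foldr (fun j f => phi j \o f) id (traject sigma i k).

Lemma comp_pathS k i g : comp_path k.+1 i g = phi i (comp_path k (sigma i) g).
Proof. by []. Qed.

Lemma tilde_comp_path r : tilde phi sigma r = comp_path (fingraph.order sigma r) r.
Proof. by []. Qed.

Lemma comp_path_morph k i : {morph comp_path k i : a b / a * b}.
Proof. by elim: k i => [|k IH] i a b //; rewrite !comp_pathS IH phiM. Qed.

Lemma tilde_equiv r : equivalence (tconj (tilde phi sigma r)).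
Proof. by apply: tconj_equiv; rewrite tilde_comp_path; exact: comp_path_morph. Qed.

Fixpoint cycle_prod (x : 'I_n -> G) k i : G :=
  if k is k'.+1 then x i * phi i (cycle_prod x k' (sigma i)) else 1.

Lemma cycle_prod_conj (x y h : 'I_n -> G) :
  (forall i, x i = h i * y i * (phi i (h (sigma i)))^-1) ->
  forall k i, cycle_prod x k i =
    h i * cycle_prod y k i * (comp_path k i (h (iter k sigma i)))^-1.
Proof.
move=> xE; elim=> [|k IH] i /=; first by rewrite mulg1 mulgV.
by rewrite xE IH !phiM (morph_V (phiM i)) comp_pathS -iterS iterSr -!mulgA mulKg.
Qed.

Lemma cycle_prod_trivial x k i :
  (forall l, l < k -> x (iter l sigma i) = 1) -> cycle_prod x k i = 1.
Proof.
elim: k i => [|k IH] i x1 //=; rewrite IH => [|l lk]; last by rewrite -iterSr x1.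
by rewrite morph_1 // mulg1 (x1 0%N).
Qed.

(* cycle_prod_conj solved for h_i, given the value g of h at the end of the
   path; this is how a twisting element is rebuilt from its values on reps. *)
Definition pull_back (x y : 'I_n -> G) k i g : G :=
  cycle_prod x k i * comp_path k i g * (cycle_prod y k i)^-1.

Lemma pull_back0 x y i g : pull_back x y 0 i g = g.
Proof. by rewrite /pull_back mul1g invg1 mulg1. Qed.

Lemma pull_backS x y k i g :
  pull_back x y k.+1 i g = x i * phi i (pull_back x y k (sigma i) g) * (y i)^-1.
Proof. by rewrite /pull_back /= comp_pathS invMg !phiM (morph_V (phiM i)) !mulgA. Qed.

Lemma phiN_morph : {morph phiN phi sigma : a b / a * b}.
Proof. by move=> a b; apply/ffunP=> i; rewrite !ffunE phiM. Qed.

Lemma tconj_phiN x y : tconj (phiN phi sigma) x y <->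
  exists h : prodG n G, forall i, x i = h i * y i * (phi i (h (sigma i)))^-1.
Proof.
split=> [[h ->]|[h xE]]; exists h.
  by move=> i; rewrite !ffunE.
by apply/ffunP=> i; rewrite !ffunE xE.
Qed.

End CycleProducts.

Section OrbitRepresentatives.
Variables (n : nat) (sigma : {perm 'I_n}) (reps : seq 'I_n).
Hypothesis reps_cover :
  forall i : 'I_n, count (fun r => i \in orbit sigma r) reps = 1%N.

Lemma reps_orbit_unique i r r' : r \in reps -> r' \in reps ->
  i \in orbit sigma r -> i \in orbit sigma r' -> r = r'.
Proof.
move=> rR r'R ir ir'; have := size_filter (fun r => i \in orbit sigma r) reps.
have : r \in filter (fun r => i \in orbit sigma r) reps by rewrite mem_filter ir rR.
have : r' \in filter (fun r => i \in orbit sigma r) reps by rewrite mem_filter ir' r'R.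
by rewrite reps_cover; case: filter => [|a [|b t]] //; rewrite !inE => /eqP-> /eqP->.
Qed.

Lemma reps_uniq : uniq reps.
Proof.
apply: count_mem_uniq => r.
have le1 : count_mem r reps <= 1%N.
  by rewrite -(reps_cover r); apply: sub_count => s /eqP->; exact: in_orbit.
have [rR|/count_memPn-> //] := boolP (r \in reps).
have : 0 < count_mem r reps by rewrite -has_count has_pred1.
by case: (count_mem r reps) le1 => [|[|]].
Qed.

Lemma iter_notin_reps r l : r \in reps -> 0 < l < fingraph.order sigma r ->
  iter l sigma r \notin reps.
Proof.
move=> rR /andP[l_gt0 l_lt]; apply/negP => lR.
have r_eq : r = iter l sigma r.
  apply: (reps_orbit_unique (i := iter l sigma r)) rR lR _ (in_orbit _ _).
  by rewrite -fconnect_orbit fconnect_iter.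
by move: (findex_iter l_lt); rewrite -r_eq findex0 => l0; rewrite -l0 in l_gt0.
Qed.

Definition rep i := nth i reps (find (fun r => i \in orbit sigma r) reps).

Lemma has_rep i : has (fun r => i \in orbit sigma r) reps.
Proof. by rewrite has_count reps_cover. Qed.

Lemma rep_in i : rep i \in reps.
Proof. by rewrite /rep mem_nth // -has_find has_rep. Qed.

Lemma rep_orbit i : i \in orbit sigma (rep i).
Proof. exact: (nth_find i (has_rep i)). Qed.

Lemma rep_sigma i : rep (sigma i) = rep i.
Proof.
have same_orbit :
    (fun r => sigma i \in orbit sigma r) =1 (fun r => i \in orbit sigma r).
  move=> r; rewrite /= -!fconnect_orbit.
  by rewrite -(same_fconnect1_r (@perm_inj _ sigma)).
rewrite /rep (eq_find same_orbit); apply: set_nth_default.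
by rewrite -has_find has_rep.
Qed.

End OrbitRepresentatives.

Section Comparison.
Variables (G : groupType) (n : nat) (phi : 'I_n -> G -> G) (sigma : {perm 'I_n}).
Hypothesis phiM : forall i, {morph phi i : x y / x * y}.

Local Notation len r := (fingraph.order sigma r).
Local Notation cyc x r := (cycle_prod phi sigma x (len r) r).
Local Notation Gtuple := (tprod (fun _ : 'I_n => G)).

Definition cycle_rel (s : seq 'I_n) : Gtuple s -> Gtuple s -> Prop :=
  @tprod_rel _ _ (fun r => tconj (tilde phi sigma r)) s.

Fixpoint cycle_values (s : seq 'I_n) (x : 'I_n -> G) : Gtuple s :=
  match s return Gtuple s with
  | [::] => tt
  | r :: s' => (cyc x r, cycle_values s' x)
  end.

(* The component of a tuple indexed by i (1 if i does not occur in s). *)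
Fixpoint lookup (s : seq 'I_n) : Gtuple s -> 'I_n -> G :=
  match s return Gtuple s -> 'I_n -> G with
  | [::] => fun _ _ => 1
  | r :: s' => fun p i => if i == r then p.1 else lookup p.2 i
  end.

Lemma cycle_rel_values s x y :
  cycle_rel (cycle_values s x) (cycle_values s y) <->
  (forall r, r \in s -> tconj (tilde phi sigma r) (cyc x r) (cyc y r)).
Proof.
elim: s => [|r s IH] /=; first by split => // _ r; rewrite in_nil.
split=> [[xy_r /IH xy_s] r'|xy]; first by rewrite inE => /orP[/eqP->|/xy_s].
split; first by apply: xy; rewrite mem_head.
by apply/IH => r' r's; apply: xy; rewrite inE r's orbT.
Qed.

Lemma cycle_values_lookup s (p : Gtuple s) x : uniq s ->
  (forall r, r \in s -> cyc x r = lookup p r) -> cycle_values s x = p.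
Proof.
elim: s p => [[]|r s IH] //= [a p] /andP[r_notin_s s_uniq] xp.
congr pair; first by rewrite xp ?mem_head //= eqxx.
apply: IH => // r' r's; rewrite xp /=; last by rewrite inE r's orbT.
by case: eqP => // r'r; rewrite -r'r r's in r_notin_s.
Qed.

Variable reps : seq 'I_n.
Hypothesis reps_cover :
  forall i : 'I_n, count (fun r => i \in orbit sigma r) reps = 1%N.

(* Every tuple of cycle values is attained, by an x supported on reps. *)
Lemma cycle_values_onto (p : Gtuple reps) :
  exists x : prodG n G, cycle_values reps x = p.
Proof.
exists [ffun i => if i \in reps then lookup p i else 1].
apply: cycle_values_lookup => [|r rR]; first exact: reps_uniq.
case len_r: (len r) (fingraph.order_gt0 sigma r) => [|m] // _.
rewrite /= (cycle_prod_trivial phiM) => [|l l_lt].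
  by rewrite morph_1 // mulg1 ffunE rR.
by rewrite ffunE -iterSr (negbTE (iter_notin_reps reps_cover rR _)) // len_r.
Qed.

Lemma cycle_values_conj (x y : prodG n G) : tconj (phiN phi sigma) x y ->
  cycle_rel (cycle_values reps x) (cycle_values reps y).
Proof.
case/tconj_phiN => h xE; apply/cycle_rel_values => r _; exists (h r).
rewrite (cycle_prod_conj phiM xE) iter_order ?tilde_comp_path //.
exact: perm_inj.
Qed.

(* Conversely, twisting elements g_r on the cycle values of the reps extend
   to a twisting element of G^n by pulling them back around each cycle. *)
Lemma twist_from_cycles (x y : prodG n G) (g : 'I_n -> G) :
  (forall r, r \in reps ->
    cyc x r = g r * cyc y r * (tilde phi sigma r (g r))^-1) ->
  tconj (phiN phi sigma) x y.
Proof.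
move=> gE; pose h i := let r := rep sigma reps i in
  pull_back phi sigma x y (len r - findex sigma r i) i (g r).
have h_cycle r : r \in reps -> pull_back phi sigma x y (len r) r (g r) = g r.
  by move=> rR; rewrite /pull_back gE // tilde_comp_path mulgKV mulgK.
have h_step i : h i = x i * phi i (h (sigma i)) * (y i)^-1.
  rewrite /h /= rep_sigma //; set r := rep sigma reps i.
  have ri : fconnect sigma r i by rewrite fconnect_orbit rep_orbit.
  have j_lt := findex_max ri; set j := findex sigma r i in j_lt *.
  have si : sigma i = iter j.+1 sigma r by rewrite iterS iter_findex.
  rewrite -(subnSK j_lt) (pull_backS sigma phiM); congr (_ * phi i _ * _).
  have [j_lt'|j_ge] := ltnP j.+1 (len r); first by rewrite si findex_iter.
  have j_eq : j.+1 = len r by apply/eqP; rewrite eqn_leq j_lt j_ge.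
  have sr : sigma i = r by rewrite si j_eq iter_order //; exact: perm_inj.
  by rewrite sr findex0 subn0 j_eq subnn pull_back0 h_cycle // rep_in.
apply/tconj_phiN; exists [ffun i => h i] => i.
by rewrite !ffunE h_step mulgKV mulgK.
Qed.

Lemma cycle_values_reflect (x y : prodG n G) :
  cycle_rel (cycle_values reps x) (cycle_values reps y) ->
  tconj (phiN phi sigma) x y.
Proof.
move/cycle_rel_values => xy.
have [g gE] : exists g : 'I_n -> G, forall r, r \in reps ->
    cyc x r = g r * cyc y r * (tilde phi sigma r (g r))^-1.
  apply: (choice (fun r g => r \in reps ->
    cyc x r = g * cyc y r * (tilde phi sigma r g)^-1)) => r.
  by have [rR|_] := boolP (r \in reps); [case: (xy r rR) => g; exists g|exists 1].
exact: twist_from_cycles gE.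
Qed.

End Comparison.

Unset Implicit Arguments.

Theorem mainTheorem5 (G : groupType) (n : nat) (hn : (0 < n)%N)
    (phi : 'I_n -> G -> G)
    (hphi : forall i, {morph phi i : x y / x * y})
    (sigma : {perm 'I_n})
    (reps : seq 'I_n)
    (hreps : forall i : 'I_n, count (fun r => i \in orbit sigma r) reps = 1%N) :
  Rnum (phiN phi sigma) = foldr emul (Some 1%N) [seq Rnum (tilde phi sigma r) | r <- reps].
Proof.
have rel_equiv := tprod_rel_equiv (T := fun _ => G) (tilde_equiv sigma hphi) reps.
rewrite RnumE -(nclasses_tprod (fun _ => 1) (tilde_equiv sigma hphi)).
apply: (nclasses_transport (F := fun x : prodG n G => cycle_values phi sigma reps x)).
- exact: tconj_equiv (phiN_morph sigma hphi).
- exact: rel_equiv.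
- move=> p; have [x <-] := cycle_values_onto hphi hreps p.
  by exists x; apply: equiv_refl rel_equiv _.
- by move=> x y; split; [exact: cycle_values_conj | exact: cycle_values_reflect].
Qed.
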